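(* For every integer $n\ge 1$ and $x\in\mathbb{R}$, $$E_{-n}^k(x)=E_n^k(-x)+\frac{k}{n+k}\,E_n^k(x).$$
   Context: Fix $k\ge 0$. Partial order on $\mathbb{Z}$: $j\triangleleft n$ iff either ($|j|<|n|$ and $|n|-|j|$ is a positive even integer) or ($|j|=|n|$ and $n<j$). Let $\delta_k(x)=|2\sin x|^{2k}$ and $(f,g)_k=\frac{1}{2\pi}\int_0^{2\pi} f(x)\overline{g(x)}\delta_k(x)\,dx$. The non-symmetric Heckman–Opdam polynomials $E_n^k$, $n\in\mathbb{Z}$, are the functions on $\mathbb{R}$ of the form $E_n^k(x)=e^{nx}+\sum_{j\triangleleft n}c_{n,j}e^{jx}$ (finite sum) such that $(E_n^k(i\,\cdot),e^{ij\,\cdot})_k=0$ for all $j\triangleleft n$. It is known that $T^kE_n^k=\tilde n E_n^k$ for the Cherednik operator $T^k f(x)=f'(x)+2k\frac{f(x)-f(-x)}{1-e^{-2x}}-kf(x)$, where $\tilde n=n+k$ if $n\ge0$ and $\tilde n=n-k$ if $n<0$. *)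

From Stdlib Require Import Reals Lra ZArith List.
From Coquelicot Require Import Coquelicot.
Open Scope R_scope.

Definition tri (j n : Z) : Prop :=
  ((Z.abs j < Z.abs n)%Z /\ (0 < Z.abs n - Z.abs j)%Z /\ Z.Even (Z.abs n - Z.abs j))
  \/ (Z.abs j = Z.abs n /\ (n < j)%Z).

(* Window -|n| .. |n|, which contains every j with j <| n. *)
Definition zrange (n : Z) : list Z :=
  map (fun m => (Z.of_nat m - Z.abs n)%Z) (seq 0 (2 * Z.abs_nat n + 1)).

Definition cis (t : R) : C := (cos t, sin t).

(* delta_k(x) = |2 sin x|^{2k}  (with 0^0 = 1) *)
Definition delta (k x : R) : R :=
  if Req_EM_T (sin x) 0 then (if Req_EM_T k 0 then 1 else 0)
  else Rpower (Rabs (2 * sin x)) (2 * k).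

Definition hk_inner (k : R) (f g : R -> C) : C :=
  scal (/ (2 * PI))
    (RInt (V := C_R_CompleteNormedModule)
       (fun x => scal (delta k x) (Cmult (f x) (Cconj (g x)))) 0 (2 * PI)).

(* x |-> e^{nx} + sum_{j <| n} c_j e^{jx}  (only j <| n contribute, c supported there) *)
Definition expsumR (n : Z) (c : Z -> R) (x : R) : R :=
  exp (IZR n * x) + fold_right Rplus 0 (map (fun j => c j * exp (IZR j * x)) (zrange n)).

(* the same exponential polynomial evaluated at i*x *)
Definition expsumI (n : Z) (c : Z -> R) (x : R) : C :=
  Cplus (cis (IZR n * x))
    (fold_right Cplus (RtoC 0) (map (fun j => Cmult (RtoC (c j)) (cis (IZR j * x))) (zrange n))).

(* E is the non-symmetric Heckman-Opdam polynomial E_n^k *)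
Definition IsHO (k : R) (n : Z) (E : R -> R) : Prop :=
  exists c : Z -> R,
    (forall j, c j <> 0 -> tri j n) /\
    (forall x, E x = expsumR n c x) /\
    (forall j, tri j n -> hk_inner k (expsumI n c) (fun x => cis (IZR j * x)) = RtoC 0).

(* Work in the exponential basis e^{jx}, |j| <= n.  There ( , )_k has Gram matrix nu(i - j),
   where the moments nu(m) = int_0^{2 pi} delta_k(x) cos(mx) dx are even, satisfy
   (m + 2k + 2) nu(m + 2) = (m - 2k) nu(m), and define a positive definite form.  The Cherednik
   operator T^k is triangular in this basis, and the recursion for nu makes it symmetric.  Hence
   E_n is an eigenvector of T^k for n + k, and as T^k(E_n(-x)) = -2k E_n(x) - (n + k) E_n(-x),
   symmetry gives (n + k) (E_n, e^{-inx}) + k (E_n, e^{inx}) = 0.  Thus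
   F(x) = E_n(-x) + k/(n + k) E_n(x) is orthogonal to e^{inx} and to all e^{ijx} with j <| n; like
   E_{-n} it is e^{-nx} plus terms e^{jx} with j <| -n, so F - E_{-n} is orthogonal to its own
   support and vanishes. *)

From Stdlib Require Import Bool Reals Lra Lia ZArith List Permutation Classical.
From Coquelicot Require Import Coquelicot.
Open Scope R_scope.

Ltac zlia := Z.to_euclidean_division_equations; lia.

(** * Finite sums over windows of integers *)

Definition zsum (l : list Z) (f : Z -> R) : R := fold_right (fun i s => f i + s) 0 l.

Lemma zsum_ext l f g : (forall i, In i l -> f i = g i) -> zsum l f = zsum l g.
Proof.
  induction l as [|a l IH]; simpl; intros H; auto.
  rewrite H, IH; auto.
Qed.

Lemma zsum_plus l f g : zsum l (fun i => f i + g i) = zsum l f + zsum l g.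
Proof. induction l; simpl; [lra|]. rewrite IHl; lra. Qed.

Lemma zsum_scal l c f : zsum l (fun i => c * f i) = c * zsum l f.
Proof. induction l; simpl; [lra|]. rewrite IHl; lra. Qed.

Lemma zsum_mult_r l f c : zsum l f * c = zsum l (fun i => f i * c).
Proof. rewrite Rmult_comm, <- zsum_scal; apply zsum_ext; intros; ring. Qed.

Lemma zsum_0 l f : (forall i, In i l -> f i = 0) -> zsum l f = 0.
Proof.
  induction l as [|a l IH]; simpl; intros H; auto.
  rewrite H, IH; auto; lra.
Qed.

Lemma zsum_swap l l' (f : Z -> Z -> R) :
  zsum l (fun i => zsum l' (f i)) = zsum l' (fun j => zsum l (fun i => f i j)).
Proof.
  induction l as [|a l IH]; simpl.
  - symmetry; apply zsum_0; auto.
  - rewrite IH, <- zsum_plus; reflexivity.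
Qed.

Lemma zsum_perm l l' f : Permutation l l' -> zsum l f = zsum l' f.
Proof. induction 1; simpl; lra. Qed.

Lemma zsum_map l g f : zsum (map g l) f = zsum l (fun i => f (g i)).
Proof. induction l; simpl; auto. rewrite IHl; auto. Qed.

Lemma fold_right_Rplus_map l g : fold_right Rplus 0 (map g l) = zsum l g.
Proof. induction l; simpl; auto. rewrite IHl; auto. Qed.

Definition kron (a i : Z) : R := if Z.eq_dec i a then 1 else 0.

Lemma kron_same a : kron a a = 1.
Proof. unfold kron; destruct (Z.eq_dec a a); congruence. Qed.

Lemma kron_neq a i : a <> i -> kron a i = 0.
Proof. unfold kron; destruct (Z.eq_dec i a); congruence. Qed.

Lemma zsum_kron l a f : NoDup l -> In a l -> zsum l (fun i => kron a i * f i) = f a.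
Proof.
  induction l as [|b l IH]; simpl; intros Hl Ha; [contradiction|].
  inversion Hl as [|? ? Hb Hl']; subst.
  destruct (Z.eq_dec a b) as [<-|Hab].
  - rewrite kron_same, zsum_0; [lra|].
    intros i Hi; rewrite kron_neq by (intros ->; contradiction); lra.
  - rewrite kron_neq, IH by (auto; destruct Ha; congruence); lra.
Qed.

Lemma In_zrange n j : In j (zrange n) <-> (- Z.abs n <= j <= Z.abs n)%Z.
Proof.
  unfold zrange; rewrite in_map_iff; split.
  - intros [m [<- Hm]]; apply in_seq in Hm; lia.
  - intros H; exists (Z.to_nat (j + Z.abs n)); rewrite in_seq; lia.
Qed.

Lemma NoDup_zrange n : NoDup (zrange n).
Proof.
  apply FinFun.Injective_map_NoDup; [intros x y; lia | apply seq_NoDup].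
Qed.

Lemma zrange_opp n : zrange (- n) = zrange n.
Proof. unfold zrange; rewrite Z.abs_opp; f_equal; f_equal; lia. Qed.

Lemma zsum_zrange_opp n f : zsum (zrange n) (fun i => f (- i)%Z) = zsum (zrange n) f.
Proof.
  rewrite <- zsum_map; apply zsum_perm, NoDup_Permutation.
  - apply FinFun.Injective_map_NoDup; [intros x y; lia | apply NoDup_zrange].
  - apply NoDup_zrange.
  - intros x; rewrite in_map_iff, In_zrange; split.
    + intros [y [<- Hy]]; apply In_zrange in Hy; lia.
    + intros Hx; exists (- x)%Z; rewrite In_zrange; lia.
Qed.

Lemma tri_pos n j : (1 <= n)%Z -> tri j n <-> (Z.abs j < n /\ (n - Z.abs j) mod 2 = 0)%Z.
Proof.
  intros Hn; unfold tri; rewrite (Z.abs_eq n) by lia; split.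
  - intros [[A [_ [m Hm]]] | [A B]]; [split; zlia | lia].
  - intros [A B]; left; repeat split; try lia; exists ((n - Z.abs j) / 2)%Z; zlia.
Qed.

Lemma tri_opp n j : (1 <= n)%Z -> tri (- j) n <-> tri j n.
Proof. intros Hn; rewrite !tri_pos, Z.abs_opp by auto; tauto. Qed.

Lemma tri_opp_r n j : (1 <= n)%Z -> tri j (- n) <-> tri j n \/ j = n.
Proof.
  intros Hn; rewrite (tri_pos n j) by auto; unfold tri.
  rewrite Z.abs_opp, (Z.abs_eq n) by lia; split.
  - intros [[A [_ [m Hm]]] | [A B]]; [left; split; zlia | right; lia].
  - intros [[A B] | ->]; [left; repeat split; try lia; exists ((n - Z.abs j) / 2)%Z; zlia | right; lia].
Qed.

Lemma tri_In n j : (1 <= n)%Z -> tri j n -> In j (zrange n).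
Proof. intros Hn H; apply tri_pos in H; auto; apply In_zrange; lia. Qed.

(** * The Cherednik operator in the exponential basis *)

(* [sig a i] is the coefficient of [e^{ix}] in [(e^{ax} - e^{-ax}) / (1 - e^{-2x})], a geometric
   sum over the [stair] of [|a|]. *)
Definition stair (p i : Z) : R :=
  if (Z.ltb (- p) i && Z.leb i p && Z.eqb ((p - i) mod 2) 0)%bool then 1 else 0.

Definition sig (a i : Z) : R := if Z_le_dec 0 a then stair a i else - stair (- a) i.

Lemma stair_spec p i :
  stair p i = 1 /\ (- p < i <= p /\ (p - i) mod 2 = 0)%Z \/
  stair p i = 0 /\ ~ (- p < i <= p /\ (p - i) mod 2 = 0)%Z.
Proof.
  unfold stair; destruct (Z.ltb_spec (- p) i), (Z.leb_spec i p), (Z.eqb_spec ((p - i) mod 2) 0);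
    simpl; [left | right ..]; split; auto; lia.
Qed.

Ltac sig_cases := unfold sig, kron; repeat
  match goal with
  | |- context [stair ?p ?i] => destruct (stair_spec p i) as [[-> ?] | [-> ?]]
  | |- context [Z.eq_dec ?a ?b] => destruct (Z.eq_dec a b)
  | |- context [Z_le_dec ?a ?b] => destruct (Z_le_dec a b)
  end.

Lemma stair_step p i : (0 <= p)%Z -> stair (p + 2) i = stair p i + kron (p + 2) i + kron (- p) i.
Proof. intros Hp; sig_cases; try lra; zlia. Qed.

Lemma sig_diag n : (0 < n)%Z -> sig n n = 1.
Proof. intros Hn; sig_cases; try lra; zlia. Qed.

Lemma sig_opp a i : sig (- a) i = - sig a i.
Proof. rewrite <- (Z.opp_involutive a) at 2; sig_cases; try lra; zlia. Qed.

Lemma sig_reflect a j : sig a (- j) - sig a j = kron (- j) a - kron j a.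
Proof. sig_cases; try lra; zlia. Qed.

Lemma sig_below n a i : (1 <= n)%Z -> tri a n -> ~ tri i n -> sig a i = 0.
Proof.
  intros Hn Ha Hi; rewrite tri_pos in Ha, Hi by auto.
  sig_cases; try lra; exfalso; apply Hi; zlia.
Qed.

Lemma sig_top n i : (1 <= n)%Z -> i <> n -> ~ tri i n -> sig n i = 0.
Proof.
  intros Hn Hin Hi; rewrite tri_pos in Hi by auto.
  sig_cases; try lra; exfalso; apply Hi; zlia.
Qed.

Fixpoint stair_sum (f : Z -> R) (x : Z) (L : nat) : R :=
  match L with
  | O => 0
  | S L => f x + stair_sum f (x - 2)%Z L
  end.

Lemma stair_sum_app f x L1 L2 :
  stair_sum f x (L1 + L2) = stair_sum f x L1 + stair_sum f (x - 2 * Z.of_nat L1)%Z L2.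
Proof.
  revert x; induction L1 as [|L1 IH]; intros x; cbn [stair_sum Nat.add].
  - rewrite Z.sub_0_r; lra.
  - rewrite IH, Nat2Z.inj_succ.
    replace (x - 2 - 2 * Z.of_nat L1)%Z with (x - 2 * Z.succ (Z.of_nat L1))%Z by lia; lra.
Qed.

Lemma stair_sum_last f x L : stair_sum f x (S L) = stair_sum f x L + f (x - 2 * Z.of_nat L)%Z.
Proof. rewrite <- Nat.add_1_r, stair_sum_app; simpl; lra. Qed.

Lemma stair_sum_split f x L1 L2 : (0 <= L1)%Z -> (0 <= L2)%Z ->
  stair_sum f x (Z.to_nat (L1 + L2)) =
  stair_sum f x (Z.to_nat L1) + stair_sum f (x - 2 * L1)%Z (Z.to_nat L2).
Proof.
  intros H1 H2; rewrite Z2Nat.inj_add, stair_sum_app, Z2Nat.id by lia; reflexivity.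
Qed.

Lemma stair_sum_shift f j x L :
  stair_sum (fun i => f (i - j)%Z) x L = stair_sum f (x - j) L.
Proof.
  revert x; induction L as [|L IH]; intros x; simpl; auto.
  rewrite IH; do 2 f_equal; lia.
Qed.

Lemma nat_ind2 (P : nat -> Prop) :
  P 0%nat -> P 1%nat -> (forall q, P q -> P (S (S q))) -> forall q, P q.
Proof.
  intros H0 H1 HS q; enough (P q /\ P (S q)) by tauto.
  induction q; [auto | split; [tauto | apply HS; tauto]].
Qed.

Lemma zsum_stair n f p : (0 <= p <= Z.abs n)%Z ->
  zsum (zrange n) (fun i => stair p i * f i) = stair_sum f p (Z.to_nat p).
Proof.
  intros Hp; pose proof (Z2Nat.id p ltac:(lia)) as Ep.
  remember (Z.to_nat p) as q eqn:Eq; subst p; clear Eq; revert Hp.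
  induction q as [| |q IH] using nat_ind2; intros Hq.
  - apply zsum_0; intros i _; sig_cases; try lra; zlia.
  - rewrite (zsum_ext _ _ (fun i => kron 1 i * f i)).
    + rewrite zsum_kron by (apply NoDup_zrange || (apply In_zrange; lia)); simpl; lra.
    + intros i _; sig_cases; try lra; zlia.
  - replace (Z.of_nat (S (S q))) with (Z.of_nat q + 2)%Z by lia.
    rewrite (zsum_ext _ _ (fun i => stair (Z.of_nat q) i * f i + (kron (Z.of_nat q + 2) i * f i
      + kron (- Z.of_nat q) i * f i))) by (intros; rewrite stair_step by lia; ring).
    rewrite !zsum_plus, IH, !zsum_kron by (lia || apply NoDup_zrange || (apply In_zrange; lia)).
    rewrite stair_sum_last; cbn [stair_sum].
    replace (Z.of_nat q + 2 - 2)%Z with (Z.of_nat q) by lia.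
    replace (Z.of_nat q + 2 - 2 * Z.of_nat (S q))%Z with (- Z.of_nat q)%Z by lia; lra.
Qed.

Definition sig_moment (nu : Z -> R) (a j : Z) : R :=
  if Z_le_dec 0 a then stair_sum nu (a - j) (Z.to_nat a)
  else - stair_sum nu (- a - j) (Z.to_nat (- a)).

Lemma zsum_sig n nu a j : In a (zrange n) ->
  zsum (zrange n) (fun i => sig a i * nu (i - j)%Z) = sig_moment nu a j.
Proof.
  intros Ha; apply In_zrange in Ha; unfold sig, sig_moment.
  destruct (Z_le_dec 0 a).
  - rewrite (zsum_stair n (fun i => nu (i - j)%Z)), stair_sum_shift by lia; reflexivity.
  - rewrite (zsum_ext _ _ (fun i => -1 * (stair (- a) i * nu (i - j)%Z))) by (intros; ring).
    rewrite zsum_scal, (zsum_stair n (fun i => nu (i - j)%Z)), stair_sum_shift by lia; ring.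
Qed.

Lemma sig_moment_sub nu a j : (j <= a)%Z ->
  sig_moment nu a j - sig_moment nu j a = stair_sum nu (a - j) (Z.to_nat (a - j)).
Proof.
  intros Hja; unfold sig_moment; destruct (Z_le_dec 0 a), (Z_le_dec 0 j); try lia.
  - replace (Z.to_nat a) with (Z.to_nat ((a - j) + j)) by (f_equal; lia).
    rewrite stair_sum_split by lia.
    replace (a - j - 2 * (a - j))%Z with (j - a)%Z by lia; lra.
  - replace (Z.to_nat (a - j)) with (Z.to_nat (a + - j)) by (f_equal; lia).
    rewrite stair_sum_split by lia.
    replace (a - j - 2 * a)%Z with (- j - a)%Z by lia; lra.
  - replace (Z.to_nat (- j)) with (Z.to_nat (- a + (a - j))) by (f_equal; lia).
    rewrite stair_sum_split by lia.
    replace (- j - a - 2 * - a)%Z with (a - j)%Z by lia.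
    replace (- j - a)%Z with (- a - j)%Z by lia; lra.
Qed.

Definition monic_below (n : Z) (e : Z -> R) : Prop :=
  e n = 1 /\ forall i, i <> n -> ~ tri i n -> e i = 0.

Section CherednikOperator.

Variables (n : Z) (k : R) (nu : Z -> R).
Hypothesis n_pos : (1 <= n)%Z.
Hypothesis k_nonneg : 0 <= k.
Hypothesis nu_even : forall m, nu (- m)%Z = nu m.
Hypothesis nu_rec : forall m, (IZR m + 2 * k + 2) * nu (m + 2)%Z = (IZR m - 2 * k) * nu m.

Local Notation W := (zrange n).

(* Read [u] as the coefficients of [sum_i u i e^{ix}] and [nu] as the moments of the weight:
   [pairing u j] is then [2 PI] times the real part of its inner product with [e^{ijx}], [gram]
   the corresponding bilinear form, and [cherednik u] the coefficients of its image under [T^k]. *)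
Definition pairing (u : Z -> R) (j : Z) : R := zsum W (fun i => u i * nu (i - j)%Z).

Definition gram (u v : Z -> R) : R := zsum W (fun j => v j * pairing u j).

Definition cherednik (u : Z -> R) (i : Z) : R :=
  (IZR i - k) * u i + 2 * k * zsum W (fun a => sig a i * u a).

Lemma moment_stair_sum m : (0 <= m)%Z ->
  IZR m * nu m + 2 * k * stair_sum nu m (Z.to_nat m) = 0.
Proof.
  assert (nu1 : nu 1%Z = 0).
  { pose proof (nu_rec (-1)) as H; pose proof (nu_even 1) as E; simpl in H, E; rewrite E in H.
    assert (H1 : (2 + 4 * k) * nu 1%Z = 0) by lra.
    apply Rmult_integral in H1; destruct H1; lra. }
  intros Hm; pose proof (Z2Nat.id m Hm) as Em.
  remember (Z.to_nat m) as q eqn:Eq; subst m; clear Eq Hm.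
  induction q as [| |q IH] using nat_ind2.
  - simpl; lra.
  - simpl; rewrite nu1; lra.
  - rewrite stair_sum_last; cbn [stair_sum].
    replace (Z.of_nat (S (S q))) with (Z.of_nat q + 2)%Z in * by lia.
    replace (Z.of_nat q + 2 - 2)%Z with (Z.of_nat q) by lia.
    replace (Z.of_nat q + 2 - 2 * Z.of_nat (S q))%Z with (- Z.of_nat q)%Z by lia.
    rewrite nu_even, plus_IZR; pose proof (nu_rec (Z.of_nat q)); lra.
Qed.

Lemma sig_moment_antisym a j :
  (IZR a - IZR j) * nu (a - j)%Z + 2 * k * (sig_moment nu a j - sig_moment nu j a) = 0.
Proof.
  destruct (Z_le_dec j a) as [Hja | Haj].
  - rewrite sig_moment_sub, <- minus_IZR by auto; apply moment_stair_sum; lia.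
  - assert (D := sig_moment_sub nu j a ltac:(lia)).
    pose proof (moment_stair_sum (j - a) ltac:(lia)) as M.
    rewrite minus_IZR in M; replace (a - j)%Z with (- (j - a))%Z by lia; rewrite nu_even.
    replace (sig_moment nu a j - sig_moment nu j a) with (- stair_sum nu (j - a) (Z.to_nat (j - a))) by lra; lra.
Qed.

Definition cherednik_gram (a j : Z) : R :=
  (IZR a - k) * nu (a - j)%Z + 2 * k * sig_moment nu a j.

Lemma cherednik_gram_sym a j : cherednik_gram a j = cherednik_gram j a.
Proof.
  unfold cherednik_gram; pose proof (sig_moment_antisym a j) as H.
  replace (j - a)%Z with (- (a - j))%Z by lia; rewrite nu_even; lra.
Qed.

Lemma gram_sym u v : gram u v = gram v u.
Proof.
  unfold gram, pairing.
  rewrite (zsum_ext W (fun j => v j * _) (fun j => zsum W (fun i => u i * (v j * nu (j - i)%Z)))).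
  - rewrite zsum_swap; apply zsum_ext; intros i _; rewrite zsum_scal; reflexivity.
  - intros j _; rewrite <- zsum_scal; apply zsum_ext; intros i _.
    replace (i - j)%Z with (- (j - i))%Z by lia; rewrite nu_even; ring.
Qed.

Lemma gram_cherednik u v :
  gram (cherednik u) v = zsum W (fun j => v j * zsum W (fun a => u a * cherednik_gram a j)).
Proof.
  unfold gram, pairing, cherednik, cherednik_gram; apply zsum_ext; intros j _; f_equal.
  transitivity (zsum W (fun i => (IZR i - k) * u i * nu (i - j)%Z) +
    2 * k * zsum W (fun i => zsum W (fun a => sig a i * u a * nu (i - j)%Z))).
  { rewrite <- zsum_scal, <- zsum_plus; apply zsum_ext; intros i _.
    rewrite <- zsum_mult_r; ring. }
  rewrite zsum_swap.
  rewrite (zsum_ext W (fun a => u a * _) (fun a => (IZR a - k) * u a * nu (a - j)%Z +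
    2 * k * zsum W (fun i => sig a i * u a * nu (i - j)%Z))).
  { rewrite zsum_plus, zsum_scal; reflexivity. }
  intros a Ha; rewrite <- (zsum_sig n nu a j Ha).
  rewrite (zsum_ext W (fun i => sig a i * u a * _) (fun i => u a * (sig a i * nu (i - j)%Z)))
    by (intros; ring).
  rewrite zsum_scal; ring.
Qed.

Lemma cherednik_symmetric u v : gram (cherednik u) v = gram u (cherednik v).
Proof.
  rewrite (gram_sym u), !gram_cherednik.
  rewrite (zsum_ext W (fun j => u j * _) (fun j => zsum W (fun a => v a * (u j * cherednik_gram a j))))
    by (intros; rewrite <- zsum_scal; apply zsum_ext; intros; ring).
  rewrite zsum_swap; apply zsum_ext; intros a _; rewrite <- zsum_scal; apply zsum_ext; intros j _.
  rewrite cherednik_gram_sym; ring.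
Qed.

Lemma cherednik_reflect u j : In j W ->
  cherednik (fun i => u (- i)%Z) j = - 2 * k * u j - cherednik u (- j)%Z.
Proof.
  intros Hj; assert (Hj' : In (- j)%Z W) by (apply In_zrange in Hj; apply In_zrange; lia).
  unfold cherednik.
  assert (E1 : zsum W (fun a => sig a j * u (- a)%Z) = - zsum W (fun a => sig a j * u a)).
  { rewrite <- (zsum_zrange_opp n); transitivity (zsum W (fun a => -1 * (sig a j * u a))).
    - apply zsum_ext; intros a _; rewrite sig_opp, Z.opp_involutive; ring.
    - rewrite zsum_scal; ring. }
  assert (E2 : zsum W (fun a => sig a (- j) * u a) = zsum W (fun a => sig a j * u a) + u (- j)%Z - u j).
  { transitivity (zsum W (fun a => sig a j * u a + (kron (- j) a * u a + -1 * (kron j a * u a)))).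
    - apply zsum_ext; intros a _; pose proof (sig_reflect a j).
      replace (sig a (- j)) with (sig a j + kron (- j) a - kron j a) by lra; ring.
    - rewrite !zsum_plus, zsum_scal, !zsum_kron by auto using NoDup_zrange; ring. }
  rewrite E1, E2, opp_IZR; ring.
Qed.

Lemma pairing_reflect u j : pairing (fun i => u (- i)%Z) j = pairing u (- j)%Z.
Proof.
  unfold pairing; rewrite <- (zsum_zrange_opp n (fun i => u (- i)%Z * nu (i - j)%Z)).
  apply zsum_ext; intros i _; rewrite Z.opp_involutive.
  replace (- i - j)%Z with (- (i - - j))%Z by lia; rewrite nu_even; reflexivity.
Qed.

Lemma pairing_linear u v w a b j : (forall i, In i W -> w i = a * u i + b * v i) ->
  pairing w j = a * pairing u j + b * pairing v j.
Proof.
  intros H; unfold pairing; rewrite <- !zsum_scal, <- zsum_plus.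
  apply zsum_ext; intros i Hi; rewrite H by auto; ring.
Qed.

Lemma gram_linear_l u v w z a b : (forall i, In i W -> w i = a * u i + b * v i) ->
  gram w z = a * gram u z + b * gram v z.
Proof.
  intros H; unfold gram; rewrite <- !zsum_scal, <- zsum_plus.
  apply zsum_ext; intros j _; rewrite (pairing_linear u v w a b) by auto; ring.
Qed.

Lemma gram_scal_r u v v' c : (forall i, In i W -> v i = c * v' i) -> gram u v = c * gram u v'.
Proof.
  intros H; unfold gram; rewrite <- zsum_scal.
  apply zsum_ext; intros j Hj; rewrite H by auto; ring.
Qed.

Lemma gram_kron u j : In j W -> gram u (kron j) = pairing u j.
Proof. intros Hj; apply zsum_kron; auto using NoDup_zrange. Qed.

Lemma gram_orthogonal (P : Z -> Prop) u v : (forall i, In i W -> ~ P i -> v i = 0) ->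
  (forall j, P j -> pairing u j = 0) -> gram u v = 0.
Proof.
  intros Hv Hu; apply zsum_0; intros j Hj.
  destruct (classic (P j)) as [HP | HP]; [rewrite Hu | rewrite Hv]; auto; ring.
Qed.

Lemma gram_monic u e : monic_below n e -> (forall j, tri j n -> pairing u j = 0) ->
  gram u e = pairing u n.
Proof.
  intros [He1 He0] Hu; unfold gram.
  rewrite (zsum_ext W _ (fun j => kron n j * pairing u j)).
  - apply (zsum_kron W n (pairing u)); [apply NoDup_zrange | apply In_zrange; lia].
  - intros j _; destruct (Z.eq_dec j n) as [-> | Hjn]; [rewrite He1, kron_same; ring |].
    rewrite kron_neq by auto; destruct (classic (tri j n)); [rewrite Hu | rewrite He0]; auto; ring.
Qed.

Hypothesis gram_definite : forall u, gram u u = 0 -> forall i, In i W -> u i = 0.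

Lemma eq0_of_orthogonal_support (P : Z -> Prop) w : (forall i, In i W -> ~ P i -> w i = 0) ->
  (forall j, P j -> pairing w j = 0) -> forall i, In i W -> w i = 0.
Proof. intros Hw Horth; apply gram_definite, (gram_orthogonal P); auto. Qed.

Lemma zsum_sig_monic e i : monic_below n e -> ~ tri i n ->
  zsum W (fun a => sig a i * e a) = sig n i.
Proof.
  intros [He1 He0] Hi.
  rewrite (zsum_ext W _ (fun a => kron n a * sig a i)).
  - apply (zsum_kron W n (fun a => sig a i)); [apply NoDup_zrange | apply In_zrange; lia].
  - intros a _; destruct (Z.eq_dec a n) as [-> | Han]; [rewrite He1, kron_same; ring |].
    rewrite kron_neq by auto; destruct (classic (tri a n)).
    + rewrite (sig_below n a i) by auto; ring.
    + rewrite He0 by auto; ring.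
Qed.

Lemma cherednik_kron j i : In j W ->
  cherednik (kron j) i = (IZR i - k) * kron j i + 2 * k * sig j i.
Proof.
  intros Hj; unfold cherednik.
  rewrite (zsum_ext W _ (fun a => kron j a * sig a i)) by (intros; ring).
  rewrite zsum_kron; auto using NoDup_zrange.
Qed.

Lemma cherednik_eigen e : monic_below n e -> (forall j, tri j n -> pairing e j = 0) ->
  forall i, In i W -> cherednik e i = (IZR n + k) * e i.
Proof.
  intros He Horth.
  set (w := fun i => 1 * cherednik e i + - (IZR n + k) * e i).
  enough (Hw : forall i, In i W -> w i = 0) by (intros i Hi; specialize (Hw i Hi); unfold w in Hw; lra).
  apply (eq0_of_orthogonal_support (fun i => tri i n)).
  - intros i Hi Hni; unfold w, cherednik; rewrite zsum_sig_monic by auto.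
    destruct He as [He1 He0].
    destruct (Z.eq_dec i n) as [-> | Hin].
    + rewrite He1, sig_diag by lia; ring.
    + rewrite He0, sig_top by auto; ring.
  - intros j Hj; rewrite (pairing_linear (cherednik e) e w 1 (- (IZR n + k))) by reflexivity.
    rewrite Horth, <- gram_kron, cherednik_symmetric by auto using tri_In.
    rewrite (gram_orthogonal (fun i => tri i n)); auto; [ring |].
    intros i _ Hni; rewrite cherednik_kron, kron_neq, (sig_below n j i) by
      (auto using tri_In; intros ->; contradiction); ring.
Qed.

Lemma pairing_monic_reflect e : monic_below n e -> (forall j, tri j n -> pairing e j = 0) ->
  (IZR n + k) * pairing e (- n)%Z + k * pairing e n = 0.
Proof.
  intros He Horth; set (se := fun i => e (- i)%Z).
  pose proof (cherednik_eigen e He Horth) as Eig.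
  assert (Hse : forall j, tri j n -> pairing se j = 0).
  { intros j Hj; unfold se; rewrite pairing_reflect; apply Horth, tri_opp; auto. }
  assert (Hsym : gram (cherednik se) e = (IZR n + k) * gram se e).
  { rewrite cherednik_symmetric; apply gram_scal_r; auto. }
  assert (Hrefl : gram (cherednik se) e = - 2 * k * gram e e + - (IZR n + k) * gram se e).
  { apply gram_linear_l; intros i Hi; unfold se.
    rewrite cherednik_reflect, Eig by (auto; apply In_zrange in Hi; apply In_zrange; lia); ring. }
  rewrite (gram_monic se e), (gram_monic e e) in * by auto.
  unfold se in *; rewrite pairing_reflect in *; lra.
Qed.

Lemma monic_reflection e f :
  monic_below n e -> (forall j, tri j n -> pairing e j = 0) ->
  monic_below (- n) f -> (forall j, tri j (- n) -> pairing f j = 0) ->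
  forall j, In j W -> f j = e (- j)%Z + k / (IZR n + k) * e j.
Proof.
  intros He Horth Hf Hforth.
  pose proof (pairing_monic_reflect e He Horth) as Key.
  destruct He as [He1 He0], Hf as [Hf1 Hf0].
  set (g := fun i => 1 * e (- i)%Z + k / (IZR n + k) * e i).
  set (w := fun i => 1 * f i + -1 * g i).
  enough (Hw : forall i, In i W -> w i = 0) by (intros i Hi; specialize (Hw i Hi); unfold w, g in Hw; lra).
  apply (eq0_of_orthogonal_support (fun j => tri j (- n))).
  - intros i _ Hni; pose proof Hni as Hni_n; rewrite tri_opp_r in Hni_n by auto.
    unfold w, g; destruct (Z.eq_dec i (- n)) as [-> | Hin].
    + rewrite Hf1, Z.opp_involutive, He1, (He0 (- n)%Z) by (lia || tauto); ring.
    + rewrite Hf0, (He0 (- i)%Z), (He0 i) by (rewrite ?tri_opp; (lia || tauto)); ring.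
  - intros j Hj; rewrite (pairing_linear f g w 1 (-1)), (pairing_linear (fun i => e (- i)%Z) e g 1 (k / (IZR n + k)))
      by reflexivity.
    rewrite pairing_reflect, Hforth by auto.
    apply tri_opp_r in Hj; auto; destruct Hj as [Hj | ->].
    + rewrite !Horth by (rewrite ?tri_opp; auto); ring.
    + assert (Hnk : 0 < IZR n + k) by (apply IZR_le in n_pos; lra).
      transitivity (- ((IZR n + k) * pairing e (- n)%Z + k * pairing e n) / (IZR n + k)).
      * field; lra.
      * rewrite Key; field; lra.
Qed.

End CherednikOperator.

(** * The weight and its moments *)

Lemma delta_0 x : delta 0 x = 1.
Proof.
  unfold delta; destruct (Req_EM_T (sin x) 0), (Req_EM_T 0 0); try lra.
  unfold Rpower; rewrite Rmult_0_r, Rmult_0_l; apply exp_0.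
Qed.

Lemma delta_exp_ln k x : sin x <> 0 -> delta k x = exp (k * ln (4 * sin x ^ 2)).
Proof.
  intros Hs; unfold delta, Rpower; destruct (Req_EM_T (sin x) 0); [contradiction |].
  assert (H : 0 < Rabs (2 * sin x)) by (apply Rabs_pos_lt; lra).
  replace (4 * sin x ^ 2) with (Rabs (2 * sin x) * Rabs (2 * sin x)).
  - rewrite ln_mult by auto; f_equal; ring.
  - rewrite <- Rabs_mult, Rabs_pos_eq by nra; ring.
Qed.

Lemma delta_sin_0 k x : 0 < k -> sin x = 0 -> delta k x = 0.
Proof.
  intros Hk Hs; unfold delta; destruct (Req_EM_T (sin x) 0), (Req_EM_T k 0); lra.
Qed.

Lemma delta_ge0 k x : 0 <= delta k x.
Proof.
  unfold delta, Rpower; destruct (Req_EM_T (sin x) 0); [destruct (Req_EM_T k 0); lra |].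
  left; apply exp_pos.
Qed.

Lemma delta_gt0 k x : sin x <> 0 -> 0 < delta k x.
Proof. intros Hs; unfold delta, Rpower; destruct (Req_EM_T (sin x) 0); [contradiction | apply exp_pos]. Qed.

Lemma continuous_of_ex_derive (f : R -> R) x : ex_derive f x -> continuous f x.
Proof. apply (ex_derive_continuous (K := R_AbsRing) (V := R_NormedModule)). Qed.

Lemma locally_sin_neq0 x : sin x <> 0 -> locally x (fun y => sin y <> 0).
Proof.
  intros Hs; apply (continuous_of_ex_derive sin x ltac:(auto_derive; auto) (fun z => z <> 0)).
  exists (mkposreal _ (Rabs_pos_lt _ Hs)); intros z Hz ->.
  unfold ball in Hz; simpl in Hz; unfold AbsRing_ball, abs, minus, plus, opp in Hz; simpl in Hz.
  rewrite Rplus_0_l, Rabs_Ropp in Hz; lra.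
Qed.

Lemma delta_lt k y eps : 0 < k -> 0 < eps -> 4 * sin y ^ 2 < exp (ln eps / k) -> delta k y < eps.
Proof.
  intros Hk He Hy; destruct (Req_dec (sin y) 0) as [Hs | Hs]; [rewrite delta_sin_0; auto |].
  rewrite delta_exp_ln by auto; rewrite <- (exp_ln eps) by auto; apply exp_increasing.
  assert (H4 : 0 < 4 * sin y ^ 2) by (pose proof (pow2_gt_0 _ Hs); lra).
  apply ln_increasing in Hy; auto; rewrite ln_exp in Hy.
  apply Rmult_lt_compat_l with (r := k) in Hy; auto.
  replace (k * (ln eps / k)) with (ln eps) in Hy by (field; lra); auto.
Qed.

Lemma delta_continuous k x : 0 <= k -> continuous (delta k) x.
Proof.
  intros Hk; destruct (Req_dec k 0) as [-> | Hk0].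
  { apply (continuous_ext (fun _ => 1)); [intros; rewrite delta_0; auto | apply continuous_const]. }
  destruct (Req_dec (sin x) 0) as [Hs | Hs].
  - apply continuity_pt_filterlim; intros eps Heps.
    set (eta := sqrt (exp (ln eps / k) / 4)).
    assert (Heta : 0 < eta) by (apply sqrt_lt_R0; pose proof (exp_pos (ln eps / k)); lra).
    assert (Heta2 : eta * eta = exp (ln eps / k) / 4)
      by (apply sqrt_sqrt; pose proof (exp_pos (ln eps / k)); lra).
    destruct (continuity_sin x eta Heta) as [a [Ha H]].
    exists a; split; auto; intros y [_ Hy]; simpl in H |- *; unfold R_dist in *.
    rewrite (delta_sin_0 k x), Rminus_0_r, Rabs_pos_eq by (auto using delta_ge0; lra).
    destruct (Req_dec x y) as [-> | Nxy]; [rewrite delta_sin_0; lra |].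
    specialize (H y (conj (conj I Nxy) Hy)); rewrite Hs, Rminus_0_r in H.
    apply Rabs_def2 in H; apply delta_lt; nra.
  - apply (continuous_ext_loc (delta k) (fun y => exp (k * ln (4 * sin y ^ 2)))).
    + generalize (locally_sin_neq0 x Hs); apply filter_imp; intros y Hy; rewrite delta_exp_ln; auto.
    + apply continuous_of_ex_derive; auto_derive.
      pose proof (pow2_gt_0 _ Hs); simpl in *; nra.
Qed.

Lemma is_derive_mult_vanishing (f g : R -> R) x l :
  is_derive f x l -> f x = 0 -> continuous g x -> g x = 0 -> is_derive (fun y => f y * g y) x 0.
Proof.
  intros Hf Hf0 Hg Hg0; apply is_derive_Reals in Hf; apply continuity_pt_filterlim in Hg.
  apply is_derive_Reals; intros eps Heps.
  set (M := Rabs l + 1); assert (HM : 0 < M) by (pose proof (Rabs_pos l); unfold M; lra).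
  destruct (Hf 1 Rlt_0_1) as [d1 Hd1].
  destruct (Hg (eps / M) ltac:(apply Rdiv_lt_0_compat; auto)) as [a [Ha Hga]].
  exists (mkposreal _ (Rmin_pos _ _ (cond_pos d1) Ha)); intros h Hh Hha; simpl in Hha.
  specialize (Hd1 h Hh (Rlt_le_trans _ _ _ Hha (Rmin_l _ _))).
  assert (Hgh : Rabs (g (x + h)) < eps / M).
  { assert (Hd : R_dist (x + h) x < a)
      by (unfold R_dist; replace (x + h - x) with h by ring; eapply Rlt_le_trans; [apply Hha | apply Rmin_r]).
    assert (Hxh : x <> x + h) by (intros E; apply Hh; lra).
    specialize (Hga (x + h) (conj (conj I Hxh) Hd)); simpl in Hga.
    unfold R_dist in Hga; rewrite Hg0, Rminus_0_r in Hga; auto. }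
  assert (Hfh : Rabs ((f (x + h) - f x) / h) < M).
  { pose proof (Rabs_triang ((f (x + h) - f x) / h - l) l); unfold M.
    replace ((f (x + h) - f x) / h - l + l) with ((f (x + h) - f x) / h) in * by ring; lra. }
  replace ((f (x + h) * g (x + h) - f x * g x) / h - 0) with ((f (x + h) - f x) / h * g (x + h))
    by (rewrite Hf0, Hg0; field; auto).
  rewrite Rabs_mult; pose proof (Rabs_pos (g (x + h))); pose proof (Rabs_pos ((f (x + h) - f x) / h)).
  replace eps with (M * (eps / M)) by (field; lra); nra.
Qed.

Lemma is_derive_sin_delta k x : 0 <= k ->
  is_derive (fun y => sin y * delta k y) x ((2 * k + 1) * cos x * delta k x).
Proof.
  intros Hk; destruct (Req_dec k 0) as [-> | Hk0].
  { apply (is_derive_ext sin); [intros t; rewrite delta_0; symmetry; apply Rmult_1_r |].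
    rewrite delta_0; auto_derive; auto; simpl; ring. }
  (* [delta k] itself is not differentiable at the zeros of [sin] when [k < 1/2]. *)
  destruct (Req_dec (sin x) 0) as [Hs | Hs].
  - rewrite (delta_sin_0 k x), Rmult_0_r by (auto; lra).
    apply (is_derive_mult_vanishing sin (delta k) x (cos x)); auto using delta_continuous.
    + auto_derive; auto; simpl; ring.
    + apply delta_sin_0; auto; lra.
  - apply (is_derive_ext_loc (fun y => sin y * exp (k * ln (4 * sin y ^ 2)))).
    + generalize (locally_sin_neq0 x Hs); apply filter_imp; intros y Hy; rewrite delta_exp_ln; auto.
    + rewrite delta_exp_ln by auto; pose proof (pow2_gt_0 _ Hs).
      auto_derive; simpl in *; [nra | field; auto].
Qed.

Lemma RInt_lincomb (f g : R -> R) a b al be : ex_RInt f a b -> ex_RInt g a b ->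
  RInt (fun x => al * f x + be * g x) a b = al * RInt f a b + be * RInt g a b.
Proof.
  intros Hf Hg.
  rewrite (RInt_plus (V := R_CompleteNormedModule) (fun x => al * f x) (fun x => be * g x)).
  - rewrite (RInt_scal (V := R_CompleteNormedModule) f), (RInt_scal (V := R_CompleteNormedModule) g); auto.
  - apply (ex_RInt_scal (V := R_NormedModule) f); auto.
  - apply (ex_RInt_scal (V := R_NormedModule) g); auto.
Qed.

Lemma ex_RInt_zsum l (F : Z -> R -> R) a b : (forall i, ex_RInt (F i) a b) ->
  ex_RInt (fun x => zsum l (fun i => F i x)) a b.
Proof.
  intros H; induction l as [|i l IH]; simpl.
  - apply (ex_RInt_const (V := R_NormedModule)).
  - apply (ex_RInt_plus (V := R_NormedModule) (F i) (fun x => zsum l (fun i => F i x))); auto.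
Qed.

Lemma RInt_zsum l (F : Z -> R -> R) a b : (forall i, ex_RInt (F i) a b) ->
  RInt (fun x => zsum l (fun i => F i x)) a b = zsum l (fun i => RInt (F i) a b).
Proof.
  intros H; induction l as [|i l IH]; simpl.
  - rewrite (RInt_const (V := R_CompleteNormedModule)); unfold scal; simpl; unfold mult; simpl; ring.
  - rewrite (RInt_plus (V := R_CompleteNormedModule) (F i) (fun x => zsum l (fun i => F i x)));
      auto using ex_RInt_zsum.
    rewrite IH; reflexivity.
Qed.

Lemma ex_derive_zsum l (F : Z -> R -> R) y : (forall i, ex_derive (F i) y) ->
  ex_derive (fun x => zsum l (fun i => F i x)) y.
Proof.
  intros H; induction l as [|i l IH]; simpl.
  - apply (ex_derive_const (K := R_AbsRing) (V := R_NormedModule)).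
  - apply (ex_derive_plus (K := R_AbsRing) (V := R_NormedModule) (F i) (fun x => zsum l (fun i => F i x))); auto.
Qed.

Lemma continuous_delta_mult k (P : R -> R) x : 0 <= k -> ex_derive P x ->
  continuous (fun y => delta k y * P y) x.
Proof.
  intros Hk HP; apply (continuous_mult (delta k) P); auto using delta_continuous, continuous_of_ex_derive.
Qed.

Lemma ex_RInt_delta_mult k (P : R -> R) a b : 0 <= k -> (forall y, ex_derive P y) ->
  ex_RInt (fun y => delta k y * P y) a b.
Proof.
  intros Hk HP; apply (ex_RInt_continuous (V := R_CompleteNormedModule)).
  intros; apply continuous_delta_mult; auto.
Qed.

Lemma ex_RInt_delta_cos k (m : Z) a b : 0 <= k -> ex_RInt (fun x => delta k x * cos (IZR m * x)) a b.
Proof. intros Hk; apply (ex_RInt_delta_mult k (fun x => cos (IZR m * x))); auto; intros; auto_derive; auto. Qed.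

Definition moment (k : R) (m : Z) : R := RInt (fun x => delta k x * cos (IZR m * x)) 0 (2 * PI).

Lemma moment_opp k m : moment k (- m) = moment k m.
Proof.
  unfold moment; apply RInt_ext; intros x _.
  rewrite opp_IZR, Ropp_mult_distr_l_reverse, cos_neg; reflexivity.
Qed.

(* Integrate the derivative of [cos ((m + 1) x) * sin x * delta k x] over a period. *)
Lemma moment_rec k m : 0 <= k ->
  (IZR m + 2 * k + 2) * moment k (m + 2) = (IZR m - 2 * k) * moment k m.
Proof.
  intros Hk.
  set (g := fun x => sin x * delta k x).
  set (F := fun x => cos (IZR (m + 1) * x) * g x).
  set (P := fun x => (2 * k + 1) * cos (IZR (m + 1) * x) * cos x - IZR (m + 1) * sin (IZR (m + 1) * x) * sin x).
  assert (HI : is_RInt (fun x => delta k x * P x) 0 (2 * PI) 0).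
  { replace 0 with (minus (F (2 * PI)) (F 0)) at 2
      by (unfold F, g, minus, plus, opp; simpl; rewrite sin_2PI, sin_0; ring).
    apply (is_RInt_derive (V := R_CompleteNormedModule) F).
    - intros x _; pose proof (is_derive_sin_delta k x Hk) as Hg; unfold F.
      auto_derive; [exists ((2 * k + 1) * cos x * delta k x); auto |].
      replace (Derive (fun y => g y) x) with ((2 * k + 1) * cos x * delta k x)
        by (symmetry; apply is_derive_unique; exact Hg).
      unfold P, g; ring.
    - intros x _; apply continuous_delta_mult; auto; unfold P; auto_derive; auto. }
  apply (is_RInt_unique (V := R_CompleteNormedModule)) in HI.
  rewrite (RInt_ext _ (fun x => / 2 * (IZR m + 2 * k + 2) * (delta k x * cos (IZR (m + 2) * x)) +
     / 2 * (2 * k - IZR m) * (delta k x * cos (IZR m * x)))) in HI.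
  - rewrite RInt_lincomb in HI by (apply ex_RInt_delta_cos; auto); unfold moment; lra.
  - intros x _; unfold P; rewrite !plus_IZR.
    replace (cos ((IZR m + IZR 2) * x)) with (cos ((IZR m + IZR 1) * x + x)) by (f_equal; ring).
    replace (cos (IZR m * x)) with (cos ((IZR m + IZR 1) * x - x)) by (f_equal; ring).
    rewrite cos_plus, cos_minus; simpl; field.
Qed.

Definition cos_poly (l : list Z) (u : Z -> R) (x : R) : R := zsum l (fun i => u i * cos (IZR i * x)).
Definition sin_poly (l : list Z) (u : Z -> R) (x : R) : R := zsum l (fun i => u i * sin (IZR i * x)).

Lemma ex_derive_cos_poly l u y : ex_derive (cos_poly l u) y.
Proof. apply (ex_derive_zsum l (fun i x => u i * cos (IZR i * x))); intros; auto_derive; auto. Qed.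

Lemma ex_derive_sin_poly l u y : ex_derive (sin_poly l u) y.
Proof. apply (ex_derive_zsum l (fun i x => u i * sin (IZR i * x))); intros; auto_derive; auto. Qed.

Lemma gram_moment n k u : 0 <= k -> gram n (moment k) u u =
  RInt (fun x => delta k x * (cos_poly (zrange n) u x ^ 2 + sin_poly (zrange n) u x ^ 2)) 0 (2 * PI).
Proof.
  intros Hk; set (W := zrange n).
  assert (Hex : forall c (m : Z), ex_RInt (fun x => c * (delta k x * cos (IZR m * x))) 0 (2 * PI)).
  { intros c m; apply (ex_RInt_scal (V := R_NormedModule)), ex_RInt_delta_cos; auto. }
  transitivity (RInt (fun x => zsum W (fun j => zsum W (fun i =>
      u j * u i * (delta k x * cos (IZR (i - j) * x))))) 0 (2 * PI)).
  - rewrite RInt_zsum by (intros j; apply ex_RInt_zsum; auto).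
    unfold gram, pairing, moment; fold W; apply zsum_ext; intros j _.
    rewrite RInt_zsum, <- zsum_scal by auto; apply zsum_ext; intros i _.
    rewrite (RInt_scal (V := R_CompleteNormedModule) (fun x => delta k x * cos (IZR (i - j) * x)))
      by (apply ex_RInt_delta_cos; auto).
    change (u j * (u i * RInt (fun x => delta k x * cos (IZR (i - j) * x)) 0 (2 * PI)) =
      u j * u i * RInt (fun x => delta k x * cos (IZR (i - j) * x)) 0 (2 * PI)); ring.
  - apply RInt_ext; intros x _; unfold cos_poly, sin_poly; fold W.
    transitivity (zsum W (fun j => delta k x * cos_poly W u x * (u j * cos (IZR j * x)) +
       delta k x * sin_poly W u x * (u j * sin (IZR j * x)))).
    + apply zsum_ext; intros j _; unfold cos_poly, sin_poly.
      transitivity (zsum W (fun i => delta k x * (u j * cos (IZR j * x)) * (u i * cos (IZR i * x)) +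
        delta k x * (u j * sin (IZR j * x)) * (u i * sin (IZR i * x)))).
      * apply zsum_ext; intros i _; rewrite minus_IZR, Rmult_minus_distr_r, cos_minus; ring.
      * rewrite zsum_plus, !zsum_scal; ring.
    + rewrite zsum_plus, !zsum_scal; unfold cos_poly, sin_poly; simpl; ring.
Qed.

Lemma RInt_continuous_ge0_eq0 (h : R -> R) c x0 : (forall x, continuous h x) -> (forall x, 0 <= h x) ->
  RInt h 0 c = 0 -> 0 < x0 < c -> h x0 = 0.
Proof.
  intros Hcont Hpos HI Hx0.
  destruct (Req_dec (h x0) 0) as [E | E]; auto; exfalso.
  assert (Hh : 0 < h x0) by (pose proof (Hpos x0); lra).
  pose proof (Hcont x0) as C; apply continuity_pt_filterlim in C.
  destruct (C (h x0 / 2) ltac:(lra)) as [al [Hal Hc2]].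
  set (r := Rmin (al / 2) (Rmin (x0 / 2) ((c - x0) / 2))).
  assert (Hr : 0 < r) by (unfold r; repeat apply Rmin_pos; lra).
  assert (Hr1 : r <= al / 2) by apply Rmin_l.
  assert (Hr2 : r <= x0 / 2) by (eapply Rle_trans; [apply Rmin_r | apply Rmin_l]).
  assert (Hr3 : r <= (c - x0) / 2) by (eapply Rle_trans; [apply Rmin_r | apply Rmin_r]).
  assert (Ex : forall a b, ex_RInt h a b)
    by (intros; apply (ex_RInt_continuous (V := R_CompleteNormedModule)); auto).
  rewrite <- (RInt_Chasles (V := R_CompleteNormedModule) h 0 (x0 - r) c),
    <- (RInt_Chasles (V := R_CompleteNormedModule) h (x0 - r) (x0 + r) c) in HI by auto.
  assert (G1 : 0 <= RInt h 0 (x0 - r)) by (apply RInt_ge_0; auto; lra).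
  assert (G3 : 0 <= RInt h (x0 + r) c) by (apply RInt_ge_0; auto; lra).
  assert (G2 : 0 < RInt h (x0 - r) (x0 + r)).
  { apply RInt_gt_0; [lra | | auto].
    intros y Hy; destruct (Req_dec y x0) as [-> | Nyx]; auto.
    assert (Hd : dist R_met y x0 < al) by (simpl; unfold R_dist; apply Rabs_def1; lra).
    specialize (Hc2 y (conj (conj I (not_eq_sym Nyx)) Hd)); simpl in Hc2; unfold R_dist in Hc2.
    apply Rabs_def2 in Hc2; lra. }
  change (plus (RInt h 0 (x0 - r)) (plus (RInt h (x0 - r) (x0 + r)) (RInt h (x0 + r) c)) = 0) in HI.
  unfold plus in HI; simpl in HI; lra.
Qed.

Lemma RInt_cos_0_PI (m : Z) : RInt (fun x => cos (IZR m * x)) 0 PI = if Z.eq_dec m 0 then PI else 0.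
Proof.
  destruct (Z.eq_dec m 0) as [-> | Hm].
  - rewrite (RInt_ext _ (fun _ => 1)), (RInt_const (V := R_CompleteNormedModule)).
    + change ((PI - 0) * 1 = PI); ring.
    + intros x _; rewrite Rmult_0_l; apply cos_0.
  - apply (is_RInt_unique (V := R_CompleteNormedModule)).
    assert (Hm' : IZR m <> 0) by (apply not_0_IZR; auto).
    set (F := fun x => sin (IZR m * x) / IZR m).
    replace 0 with (minus (F PI) (F 0)) at 2 by
      (unfold F, minus, plus, opp; simpl; rewrite Rmult_0_r, sin_0, sin_eq_0_1 by (exists m; auto);
       field; auto).
    apply (is_RInt_derive (V := R_CompleteNormedModule) F).
    + intros x _; unfold F; auto_derive; auto; field; auto.
    + intros x _; apply continuous_of_ex_derive; auto_derive; auto.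
Qed.

Lemma trig_poly_coef_eq0 n u : (forall x, 0 < x < PI -> cos_poly (zrange n) u x = 0 /\ sin_poly (zrange n) u x = 0) ->
  forall j, In j (zrange n) -> u j = 0.
Proof.
  intros CS0 j Hj; set (W := zrange n) in *; pose proof PI_RGT_0 as HPI.
  assert (Hpt : forall x, 0 < x < PI -> zsum W (fun i => u i * cos (IZR (i - j) * x)) = 0).
  { intros x Hx; destruct (CS0 x Hx) as [HC HS].
    transitivity (cos_poly W u x * cos (IZR j * x) + sin_poly W u x * sin (IZR j * x));
      [| rewrite HC, HS; ring].
    unfold cos_poly, sin_poly; rewrite !zsum_mult_r, <- zsum_plus.
    apply zsum_ext; intros i _; rewrite minus_IZR, Rmult_minus_distr_r, cos_minus; ring. }
  assert (Hcos : forall m : Z, ex_RInt (fun x => cos (IZR m * x)) 0 PI).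
  { intros m; apply (ex_RInt_continuous (V := R_CompleteNormedModule)); intros;
      apply continuous_of_ex_derive; auto_derive; auto. }
  assert (I1 : RInt (fun x => zsum W (fun i => u i * cos (IZR (i - j) * x))) 0 PI = 0).
  { rewrite (RInt_ext _ (fun _ => 0)).
    - rewrite (RInt_const (V := R_CompleteNormedModule)); change ((PI - 0) * 0 = 0); ring.
    - intros x Hx; rewrite Rmin_left, Rmax_right in Hx by lra; apply Hpt; auto. }
  rewrite RInt_zsum in I1 by (intros i; apply (ex_RInt_scal (V := R_NormedModule)), Hcos).
  rewrite (zsum_ext _ _ (fun i => kron j i * (u i * PI))) in I1.
  - rewrite zsum_kron in I1 by (apply NoDup_zrange || exact Hj); nra.
  - intros i _; rewrite (RInt_scal (V := R_CompleteNormedModule) (fun x => cos (IZR (i - j) * x))).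
    + change (u i * RInt (fun x => cos (IZR (i - j) * x)) 0 PI = kron j i * (u i * PI)).
      rewrite RInt_cos_0_PI; unfold kron; destruct (Z.eq_dec (i - j) 0), (Z.eq_dec i j); try lia; ring.
    + apply Hcos.
Qed.

Lemma gram_moment_definite n k u : 0 <= k -> gram n (moment k) u u = 0 ->
  forall j, In j (zrange n) -> u j = 0.
Proof.
  intros Hk HB; rewrite gram_moment in HB by auto; apply trig_poly_coef_eq0.
  intros x Hx; set (W := zrange n) in *.
  assert (Hd : 0 < delta k x) by (apply delta_gt0; pose proof (sin_gt_0 x); lra).
  assert (H0 : delta k x * (cos_poly W u x ^ 2 + sin_poly W u x ^ 2) = 0).
  { apply (RInt_continuous_ge0_eq0 (fun y => delta k y * (cos_poly W u y ^ 2 + sin_poly W u y ^ 2))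
      (2 * PI) x); [| | exact HB | pose proof PI_RGT_0; lra].
    - intros y; apply continuous_delta_mult; auto.
      auto_derive; repeat split; auto using ex_derive_cos_poly, ex_derive_sin_poly.
    - intros y; apply Rmult_le_pos; [apply delta_ge0 | nra]. }
  apply Rmult_integral in H0; destruct H0 as [H0 | H0]; [lra | split; nra].
Qed.

(** * Heckman-Opdam polynomials *)

Lemma expsumR_coef n c x :
  expsumR n c x = zsum (zrange n) (fun j => (kron n j + c j) * exp (IZR j * x)).
Proof.
  unfold expsumR; rewrite fold_right_Rplus_map.
  rewrite (zsum_ext _ (fun j => (kron n j + c j) * _)
    (fun j => kron n j * exp (IZR j * x) + c j * exp (IZR j * x))) by (intros; ring).
  rewrite zsum_plus, zsum_kron by (apply NoDup_zrange || (apply In_zrange; lia)); reflexivity.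
Qed.

Lemma expsumI_coef n c x : expsumI n c x =
  (cos_poly (zrange n) (fun j => kron n j + c j) x, sin_poly (zrange n) (fun j => kron n j + c j) x).
Proof.
  assert (Hl : forall l, fold_right Cplus (RtoC 0) (map (fun j => Cmult (RtoC (c j)) (cis (IZR j * x))) l)
    = (cos_poly l c x, sin_poly l c x)).
  { induction l as [|i l IH]; simpl; [reflexivity |]; rewrite IH.
    unfold Cplus, Cmult, RtoC, cis, cos_poly, sin_poly; simpl; f_equal; ring. }
  unfold expsumI; rewrite Hl; unfold cos_poly, sin_poly.
  rewrite (zsum_ext _ (fun j => (kron n j + c j) * cos _)
    (fun j => kron n j * cos (IZR j * x) + c j * cos (IZR j * x))) by (intros; ring).
  rewrite (zsum_ext _ (fun j => (kron n j + c j) * sin _)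
    (fun j => kron n j * sin (IZR j * x) + c j * sin (IZR j * x))) by (intros; ring).
  rewrite !zsum_plus, !zsum_kron by (apply NoDup_zrange || (apply In_zrange; lia)).
  reflexivity.
Qed.

Lemma Cmult_trig_poly_cis l e x y :
  Cmult (cos_poly l e x, sin_poly l e x) (Cconj (cis (IZR y * x))) =
  (zsum l (fun i => e i * cos (IZR (i - y) * x)), zsum l (fun i => e i * sin (IZR (i - y) * x))).
Proof.
  unfold Cmult, Cconj, cis; simpl; f_equal.
  - transitivity (cos_poly l e x * cos (IZR y * x) + sin_poly l e x * sin (IZR y * x)); [ring |].
    unfold cos_poly, sin_poly; rewrite !zsum_mult_r, <- zsum_plus; apply zsum_ext; intros i _.
    rewrite minus_IZR, Rmult_minus_distr_r, cos_minus; ring.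
  - transitivity (sin_poly l e x * cos (IZR y * x) + cos_poly l e x * - sin (IZR y * x)); [ring |].
    unfold cos_poly, sin_poly; rewrite !zsum_mult_r, <- zsum_plus; apply zsum_ext; intros i _.
    rewrite minus_IZR, Rmult_minus_distr_r, sin_minus; ring.
Qed.

Lemma hk_inner_expsumI n k c j : 0 <= k ->
  fst (hk_inner k (expsumI n c) (fun x => cis (IZR j * x))) =
  / (2 * PI) * pairing n (moment k) (fun i => kron n i + c i) j.
Proof.
  intros Hk; unfold hk_inner; set (W := zrange n); set (e := fun i => kron n i + c i).
  set (P := fun x => zsum W (fun i => e i * cos (IZR (i - j) * x))).
  set (Q := fun x => zsum W (fun i => e i * sin (IZR (i - j) * x))).
  assert (Hpt : forall x, scal (delta k x) (Cmult (expsumI n c x) (Cconj (cis (IZR j * x)))) =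
    (delta k x * P x, delta k x * Q x)).
  { intros x; rewrite expsumI_coef, Cmult_trig_poly_cis; fold W e.
    unfold scal; simpl; unfold prod_scal; simpl; unfold scal; simpl; unfold mult; reflexivity. }
  assert (HexP : ex_RInt (fun x => delta k x * P x) 0 (2 * PI)).
  { apply ex_RInt_delta_mult; auto; intros y; apply ex_derive_zsum; intros; auto_derive; auto. }
  assert (HexQ : ex_RInt (fun x => delta k x * Q x) 0 (2 * PI)).
  { apply ex_RInt_delta_mult; auto; intros y; apply ex_derive_zsum; intros; auto_derive; auto. }
  rewrite (RInt_ext (V := C_R_CompleteNormedModule) _ (fun x => (delta k x * P x, delta k x * Q x)))
    by (intros; apply Hpt).
  rewrite (is_RInt_unique (V := C_R_CompleteNormedModule) _ 0 (2 * PI)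
    (RInt (fun x => delta k x * P x) 0 (2 * PI), RInt (fun x => delta k x * Q x) 0 (2 * PI))).
  - simpl; unfold scal; simpl; unfold prod_scal; simpl; unfold scal; simpl; unfold mult; simpl.
    f_equal; unfold pairing, moment, P; fold W.
    rewrite (RInt_ext _ (fun x => zsum W (fun i => e i * (delta k x * cos (IZR (i - j) * x))))).
    + rewrite RInt_zsum; [apply zsum_ext; intros i _ |].
      * apply (RInt_scal (V := R_CompleteNormedModule)), ex_RInt_delta_cos; auto.
      * intros i; apply (ex_RInt_scal (V := R_NormedModule)), ex_RInt_delta_cos; auto.
    + intros x _; rewrite <- zsum_scal; apply zsum_ext; intros; ring.
  - apply (is_RInt_fct_extend_pair (U := R_NormedModule) (V := R_NormedModule)); simpl;
      apply (RInt_correct (V := R_CompleteNormedModule)); auto.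
Qed.

Lemma IsHO_monic k n E : 0 <= k -> IsHO k n E -> exists e,
  monic_below n e /\ (forall j, tri j n -> pairing n (moment k) e j = 0) /\
  forall x, E x = zsum (zrange n) (fun j => e j * exp (IZR j * x)).
Proof.
  intros Hk [c [Hc [HE Horth]]]; exists (fun i => kron n i + c i).
  assert (Hc0 : forall i, ~ tri i n -> c i = 0).
  { intros i Hi; destruct (Req_dec (c i) 0); [auto | exfalso; apply Hi, Hc; auto]. }
  repeat split.
  - rewrite kron_same, Hc0 by (unfold tri; lia); ring.
  - intros i Hin Hi; rewrite kron_neq, Hc0 by auto; ring.
  - intros j Hj; pose proof (hk_inner_expsumI n k c j Hk) as H.
    rewrite Horth in H by auto; simpl in H.
    assert (0 < / (2 * PI)) by (apply Rinv_0_lt_compat; pose proof PI_RGT_0; lra); nra.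
  - intros x; rewrite HE; apply expsumR_coef.
Qed.

Theorem mainTheorem3 (k : R) (n : Z) (En Emn : R -> R) :
  0 <= k -> (1 <= n)%Z ->
  IsHO k n En -> IsHO k (- n) Emn ->
  forall x : R, Emn x = En (- x) + k / (IZR n + k) * En x.
Proof.
  intros Hk Hn HE HEm x.
  destruct (IsHO_monic k n En Hk HE) as [e [He [Horth HEx]]].
  destruct (IsHO_monic k (- n) Emn Hk HEm) as [f [Hf [Hforth HEmx]]].
  unfold pairing in Hforth; rewrite zrange_opp in Hforth.
  pose proof (monic_reflection n k (moment k) Hn Hk (moment_opp k) (fun m => moment_rec k m Hk)
    (fun u => gram_moment_definite n k u Hk) e f He Horth Hf Hforth) as Hfe.
  rewrite HEmx, !HEx, zrange_opp, <- (zsum_zrange_opp n (fun j => e j * exp (IZR j * - x))).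
  rewrite <- zsum_scal, <- zsum_plus; apply zsum_ext; intros j Hj.
  rewrite Hfe, opp_IZR by auto; replace (- IZR j * - x) with (IZR j * x) by ring; ring.
Qed.
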